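(* A matrix $Y\in\mathcal{H}^{n\times r}$ is a right canonical matrix for $T$ at $\lambda_0$ if and only if (i) $Y(\lambda_0)\in\mathbb{C}^{n\times r}$ has full column rank, and (ii) $TY\Delta^{-1}\doteq 0$, i.e. $TY\Delta^{-1}$ is holomorphic in a neighborhood of $\lambda_0$.
   Context: Let $\Omega\subset\mathbb{C}$ be open and $\lambda_0\in\Omega$ fixed. $\mathcal{H}$ denotes the ring of holomorphic functions on $\Omega$, and $\mathcal{H}_0$ the ring of functions holomorphic in some neighborhood of $\lambda_0$. Write $\chi_0(\lambda)=\lambda-\lambda_0$. For meromorphic matrices $M_1,M_2$ of equal size, $M_1\doteq M_2$ means that $M_2-M_1$ is holomorphic in a neighborhood of $\lambda_0$. Throughout, $T\in\mathcal{H}^{n\times n}$ with $\det T$ not identically zero and $\det T(\lambda_0)=0$, and $r=\dim\ker T(\lambda_0)$. There exist $U_L,U_R\in\mathcal{H}_0^{n\times n}$ with $U_L(\lambda_0),U_R(\lambda_0)$ nonsingular and uniquely determined integers $m_1\ge\cdots\ge m_n\ge 0$ (the partial multiplicities) with $U_LTU_R=\mathrm{diag}(\chi_0^{m_1},\dots,\chi_0^{m_n})$; $m_i>0$ exactly for $i\le r$. Set $\Delta=\mathrm{diag}(\chi_0^{m_1},\dots,\chi_0^{m_r})$. A root function for $T$ at $\lambda_0$ is $y\in\mathcal{H}^n$ with $y(\lambda_0)\neq0$ and $T(\lambda_0)y(\lambda_0)=0$; its multiplicity $\nu(y)$ is the order of the zero of $Ty$ at $\lambda_0$. A right canonical matrix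 for $T$ at $\lambda_0$ is $Y\in\mathcal{H}^{n\times r}$ whose columns $y_1,\dots,y_r$ are root functions such that (a) $y_1(\lambda_0),\dots,y_r(\lambda_0)$ are linearly independent, (b) $\sum_{i=1}^r\nu(y_i)=\sum_{i=1}^r m_i$, (c) $\nu(y_1)\ge\cdots\ge\nu(y_r)$. *)

From mathcomp Require Import all_boot all_order all_algebra.
From mathcomp Require Import complex.
From mathcomp Require Import all_classical all_reals all_analysis.
Import numFieldNormedType.Exports.
Import Order.TTheory GRing.Theory Num.Theory.

Set Implicit Arguments.
Unset Strict Implicit.
Unset Printing Implicit Defensive.

Local Open Scope classical_set_scope.
Local Open Scope ring_scope.

Definition Cx (R : realType) : numClosedFieldType := R[i].

Section Defs.
Variable R : realType.
Local Notation C := (Cx R).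

(* complex differentiability: derivable along 1 with complex scalars *)
Definition holo_on (O : set C) (f : C -> C) : Prop :=
  forall z, O z -> derivable f z 1.

Definition holo_near (z0 : C) (f : C -> C) : Prop :=
  \forall z \near z0, derivable f z 1.

Definition mx_holo_on (p q : nat) (O : set C) (M : C -> 'M[C]_(p, q)) : Prop :=
  forall i j, holo_on O (fun z => M z i j).

Definition mx_holo_near (p q : nat) (z0 : C) (M : C -> 'M[C]_(p, q)) : Prop :=
  forall i j, holo_near z0 (fun z => M z i j).

(* F (a function defined at least on a punctured neighborhood of z0, e.g. a
   meromorphic matrix) is holomorphic in a neighborhood of z0: it coincides on
   a punctured neighborhood of z0 with a function holomorphic near z0. *)
Definition mx_holo_germ (p q : nat) (z0 : C) (F : C -> 'M[C]_(p, q)) : Prop :=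
  exists G : C -> 'M[C]_(p, q),
    mx_holo_near z0 G /\ \forall z \near z0^', F z = G z.

Definition mx_doteq (p q : nat) (z0 : C) (M1 M2 : C -> 'M[C]_(p, q)) : Prop :=
  mx_holo_germ z0 (fun z => M2 z - M1 z).

(* diag(chi0^{m_0}, ..., chi0^{m_{k-1}}) and its inverse (0-based indices) *)
Definition diag_pow (k : nat) (z0 : C) (m : nat -> nat) (z : C) : 'M[C]_k :=
  \matrix_(i, j) (if i == j then (z - z0) ^+ m i else 0).

Definition diag_pow_inv (k : nat) (z0 : C) (m : nat -> nat) (z : C) : 'M[C]_k :=
  \matrix_(i, j) (if i == j then ((z - z0) ^+ m i)^-1 else 0).

Definition partial_multiplicities (n : nat) (T : C -> 'M[C]_n) (z0 : C)
    (m : nat -> nat) : Prop :=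
  (forall i j, (i <= j < n)%N -> (m j <= m i)%N) /\
  exists UL UR : C -> 'M[C]_n,
    [/\ mx_holo_near z0 UL, mx_holo_near z0 UR,
        UL z0 \in unitmx, UR z0 \in unitmx &
        \forall z \near z0, UL z *m T z *m UR z = diag_pow n z0 m z].

Definition root_function (n : nat) (O : set C) (T : C -> 'M[C]_n) (z0 : C)
    (y : C -> 'cV[C]_n) : Prop :=
  [/\ mx_holo_on O y, y z0 != 0 & T z0 *m y z0 = 0].

Definition zero_order (n : nat) (z0 : C) (F : C -> 'cV[C]_n) (k : nat) : Prop :=
  exists g : C -> 'cV[C]_n,
    [/\ mx_holo_near z0 g, g z0 != 0 &
        \forall z \near z0, F z = (z - z0) ^+ k *: g z].

Definition root_mult (n : nat) (T : C -> 'M[C]_n) (z0 : C)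
    (y : C -> 'cV[C]_n) (k : nat) : Prop :=
  zero_order z0 (fun z => T z *m y z) k.

(* right canonical matrix (columns y_1..y_r are col 0 .. col (r-1)) *)
Definition right_canonical (n r : nat) (O : set C) (T : C -> 'M[C]_n) (z0 : C)
    (m : nat -> nat) (Y : C -> 'M[C]_(n, r)) : Prop :=
  [/\ mx_holo_on O Y,
      (forall j : 'I_r, root_function O T z0 (fun z => col j (Y z))),
      (forall c : 'cV[C]_r, Y z0 *m c = 0 -> c = 0) &
      exists nu : 'I_r -> nat,
        [/\ forall j : 'I_r, root_mult T z0 (fun z => col j (Y z)) (nu j),
            (\sum_(j < r) nu j = \sum_(i < r) m i)%N &
            forall i j : 'I_r, (i <= j)%N -> (nu j <= nu i)%N]].

End Defs.

From mathcomp Require Import all_boot all_order all_algebra.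
From mathcomp Require Import complex.
From mathcomp Require Import all_classical all_reals all_analysis.
Import numFieldNormedType.Exports.
Local Open Scope classical_set_scope.
Local Open Scope ring_scope.
Import Order.TTheory GRing.Theory Num.Theory.
Set Implicit Arguments.
Unset Strict Implicit.
Unset Printing Implicit Defensive.

(* Near l0 write U_L T U_R = D := diag((z - l0)^m_i) and put W := adj(U_R(l0)) Y(l0),
   which has full column rank together with Y(l0).  If the l-th column of T Y is
   (z - l0)^k h(z) with h continuous, then D adj(U_R) Y = det(U_R) U_L T Y shows that
   W_il = 0 whenever m_i < k, or m_i = k and h(l0) = 0.  Linearly independent columns
   supported on the rows {i | m_i > t} number at most #{i | m_i > t}, and as the m_i are
   nonincreasing this is the number of l < r with m_l > t.  For a canonical matrix this
   forces nu_j <= m_j, hence nu = m by (b); conversely, when T Y Delta^-1 is holomorphic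
   it forces the j-th column of T Y to vanish to order exactly m_j. *)

Section ContinuityAt.
Variables (R : realType) (z0 : Cx R).
Local Notation C := (Cx R).

Lemma continuous_sum_at (I : Type) (s : seq I) (P : pred I) (F : I -> C -> C) :
  (forall i, {for z0, continuous (F i)}) ->
  {for z0, continuous (fun z => \sum_(i <- s | P i) F i z)}.
Proof.
move=> hF; apply: cvg_big; [exact: add_continuous | exact: nbhs_filter |].
by move=> i _; apply: hF.
Qed.

Lemma continuous_prod_at (I : Type) (s : seq I) (P : pred I) (F : I -> C -> C) :
  (forall i, {for z0, continuous (F i)}) ->
  {for z0, continuous (fun z => \prod_(i <- s | P i) F i z)}.
Proof.
move=> hF; apply: cvg_big; [exact: mul_continuous | exact: nbhs_filter |].
by move=> i _; apply: hF.
Qed.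

Lemma continuous_chi_at k : {for z0, continuous (fun z : C => (z - z0) ^+ k)}.
Proof.
have -> : (fun z : C => (z - z0) ^+ k) = (fun z => \prod_(i < k) (z - z0)).
  by apply/funext => z; rewrite prodr_const card_ord.
apply: continuous_prod_at => _.
exact: (cvgD cvg_id (@cvg_cst _ (- z0) _ _ (nbhs_filter z0))).
Qed.

Lemma derivable_continuous_at (f : C -> C) :
  derivable f z0 1 -> {for z0, continuous f}.
Proof. by move/derivable1_diffP/differentiable_continuous. Qed.

Lemma continuous_dnbhs_eq (f g : C -> C) :
  {for z0, continuous f} -> {for z0, continuous g} ->
  (\forall z \near z0^', f z = g z) -> f z0 = g z0.
Proof.
move=> /continuous_withinNx cf /continuous_withinNx cg fg.
have gf : g z @[z --> z0^'] --> f z0.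
  by apply: cvg_trans cf; apply: near_eq_cvg; apply: filterS fg => z ->.
exact: (cvg_unique (@norm_hausdorff _ C) gf cg).
Qed.

Definition mx_continuous_at p q (M : C -> 'M[C]_(p, q)) :=
  forall i j, {for z0, continuous (fun z => M z i j)}.

Lemma mx_continuous_mul p q s (A : C -> 'M[C]_(p, q)) (B : C -> 'M[C]_(q, s)) :
  mx_continuous_at A -> mx_continuous_at B ->
  mx_continuous_at (fun z => A z *m B z).
Proof.
move=> cA cB i j.
have -> : (fun z => (A z *m B z) i j) = fun z => \sum_k A z i k * B z k j.
  by apply/funext => z; rewrite mxE.
by apply: continuous_sum_at => k; apply: continuousM.
Qed.

Lemma continuous_det p (A : C -> 'M[C]_p) :
  mx_continuous_at A -> {for z0, continuous (fun z => \det (A z))}.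
Proof.
move=> cA; apply: continuous_sum_at => s.
apply: continuousM; first exact: cst_continuous.
by apply: continuous_prod_at => i; apply: cA.
Qed.

Lemma mx_continuous_adj p (A : C -> 'M[C]_p) :
  mx_continuous_at A -> mx_continuous_at (fun z => \adj (A z)).
Proof.
move=> cA i j.
have -> : (fun z => \adj (A z) i j) = fun z => cofactor (A z) j i.
  by apply/funext => z; rewrite mxE.
apply: continuousM; first exact: cst_continuous.
apply: continuous_det => a b.
have -> : (fun z => row' j (col' i (A z)) a b) = fun z => A z (lift j a) (lift i b).
  by apply/funext => z; rewrite !mxE.
exact: cA.
Qed.

Lemma continuous_dnbhs_mx_eq p q (M N : C -> 'M[C]_(p, q)) :
  mx_continuous_at M -> mx_continuous_at N ->
  (\forall z \near z0^', M z = N z) -> \forall z \near z0, M z = N z.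
Proof.
move=> cM cN MN.
have MN0 : M z0 = N z0.
  apply/matrixP => i j; apply: continuous_dnbhs_eq (cM i j) (cN i j) _.
  by apply: filterS MN => z ->.
have MN' : \forall z \near z0, z != z0 -> M z = N z := MN.
by apply: filterS MN' => z MNz; have [->|/MNz] := eqVneq z z0.
Qed.

Lemma mx_holo_near_continuous p q (M : C -> 'M[C]_(p, q)) :
  mx_holo_near z0 M -> mx_continuous_at M.
Proof. by move=> hM i j; apply: derivable_continuous_at (nbhs_singleton (hM i j)). Qed.

Lemma mx_holo_on_continuous p q (O : set C) (M : C -> 'M[C]_(p, q)) :
  mx_holo_on O M -> O z0 -> mx_continuous_at M.
Proof. by move=> hM Oz0 i j; apply: derivable_continuous_at (hM i j z0 Oz0). Qed.

Lemma mx_continuous_col p q (M : C -> 'M[C]_(p, q)) l :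
  mx_continuous_at M -> mx_continuous_at (fun z => col l (M z)).
Proof.
move=> cM i k; have -> : (fun z => col l (M z) i k) = fun z => M z i l.
  by apply/funext => z; rewrite mxE.
exact: cM.
Qed.

Lemma mx_continuous_chi_scale p q k (M : C -> 'M[C]_(p, q)) :
  mx_continuous_at M -> mx_continuous_at (fun z => (z - z0) ^+ k *: M z).
Proof.
move=> cM i j; have -> : (fun z => ((z - z0) ^+ k *: M z) i j) =
                          fun z => (z - z0) ^+ k * M z i j.
  by apply/funext => z; rewrite mxE.
by apply: continuousM; [exact: continuous_chi_at | exact: cM].
Qed.

Lemma eq0_of_chi_pow_mul (f g : C -> C) (a b : nat) :
  {for z0, continuous f} -> {for z0, continuous g} ->
  (\forall z \near z0^', (z - z0) ^+ a * f z = (z - z0) ^+ b * g z) ->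
  (a < b)%N \/ (a = b /\ g z0 = 0) -> f z0 = 0.
Proof.
move=> cf cg fg ab.
have ab' : (a <= b)%N by case: ab => [/ltnW|[->]].
have cg' : {for z0, continuous (fun z => (z - z0) ^+ (b - a) * g z)}.
  by apply: continuousM; [exact: continuous_chi_at | exact: cg].
have -> : f z0 = (z0 - z0) ^+ (b - a) * g z0.
  apply: continuous_dnbhs_eq cf cg' _.
  apply: filterS2 fg (nbhs_dnbhs_neq z0) => z fgz zz0.
  have chi_neq0 : (z - z0) ^+ a != 0 by rewrite expf_neq0 // subr_eq0.
  by apply: (mulfI chi_neq0); rewrite fgz /= mulrA -exprD subnKC.
rewrite subrr expr0n; case: ab => [lt_ab | [-> ->]]; last by rewrite mulr0.
by rewrite subn_eq0 leqNgt lt_ab mul0r.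
Qed.

End ContinuityAt.

Section ColumnRank.
Variable F : fieldType.

Lemma rank_colP n r (W : 'M[F]_(n, r)) :
  reflect (forall c : 'cV[F]_r, W *m c = 0 -> c = 0) (\rank W == r).
Proof.
rewrite -mxrank_tr -/(row_free W^T); apply: (iffP idP) => [freeW c Wc0 | Winj].
  apply: trmx_inj; apply/eqP.
  by rewrite trmx0 -(mulmx_free_eq0 _ freeW) -trmx_mul Wc0 trmx0.
rewrite -kermx_eq0; apply/eqP/row_matrixP => k; rewrite row0.
apply: trmx_inj; rewrite trmx0; apply: Winj.
by rewrite -[W in W *m _]trmxK -trmx_mul -row_mul mulmx_ker row0 trmx0.
Qed.

Lemma rank_le_card_nonzero_rows m n (V : 'M[F]_(m, n)) (A : {pred 'I_m}) :
  (forall i j, i \notin A -> V i j = 0) -> (\rank V <= #|A|)%N.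
Proof.
move=> V0; apply: leq_trans (rank_leq_row (rowsub (enum_val : 'I_#|A| -> _) V)).
apply/mxrankS/row_subP => i; have [iA | iNA] := boolP (i \in A).
  by rewrite -(enum_rankK_in iA iA) -row_rowsub row_sub.
have -> : row i V = 0 by apply/rowP => j; rewrite !mxE V0.
exact: sub0mx.
Qed.

Lemma card_le_of_col_support n r (W : 'M[F]_(n, r)) (S : {pred 'I_r})
    (A : {pred 'I_n}) :
  \rank W = r -> (forall i l, l \in S -> i \notin A -> W i l = 0) ->
  (#|S| <= #|A|)%N.
Proof.
move=> /eqP/rank_colP Winj WSA; pose g : 'I_#|S| -> 'I_r := enum_val.
have /eqP <- : \rank (colsub g W) == #|S|.
  apply/rank_colP => c; rewrite -[W]mulmx1 -mulmx_colsub -mulmxA => /Winj Pc0.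
  apply/colP => k; have /colP/(_ (g k)) := Pc0; rewrite !mxE => <-.
  rewrite (bigD1 k) //= big1 ?addr0 => [|k' k'k]; rewrite !mxE.
    by rewrite eqxx mul1r.
  by rewrite (inj_eq enum_val_inj) eq_sym (negbTE k'k) mul0r.
by apply: rank_le_card_nonzero_rows => i k iA; rewrite mxE WSA ?enum_valP.
Qed.

Lemma rank_col_neq0 n r (W : 'M[F]_(n, r)) l : \rank W = r -> col l W != 0.
Proof.
move=> /eqP/rank_colP Winj; apply/eqP => Wl0.
have : W *m (delta_mx l 0 : 'cV_r) = 0 by rewrite -colE.
by move/Winj/matrixP/(_ l 0); rewrite !mxE !eqxx => /eqP; rewrite oner_eq0.
Qed.

End ColumnRank.

Section NonincreasingMultiplicities.
Local Open Scope nat_scope.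
Variables (n r : nat) (m : nat -> nat).
Hypothesis m_noninc : forall i j, i <= j < n -> m j <= m i.
Hypothesis r_le_n : r <= n.

Lemma lt_of_mult_gt (i j t : nat) : i < n -> m j <= t < m i -> i < j.
Proof.
move=> lt_in /andP[mjt tmi]; rewrite ltnNge; apply/negP => le_ji.
have := @m_noninc j i; rewrite le_ji lt_in => /(_ isT) mij.
by rewrite ltnNge (leq_trans mij mjt) in tmi.
Qed.

Lemma card_mult_gt_widen (t : nat) (j : 'I_r) : m j <= t ->
  #|[pred i : 'I_n | t < m i]| = #|[pred l : 'I_r | t < m l]|.
Proof.
move=> mjt; rewrite -!sum1_card [RHS]big_mkcond /=.
rewrite (big_ord_widen _ (fun i => if t < m i then 1 else 0) r_le_n) big_mkcond /=.
rewrite [RHS]big_mkcond; apply: eq_bigr => i _; rewrite inE.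
case: ifP => tmi; last by case: ifP.
have ij : i < j by apply: (lt_of_mult_gt (t := t) (ltn_ord i)); rewrite mjt.
by rewrite (ltn_trans ij (ltn_ord j)).
Qed.

Lemma card_mult_gt_lt (t : nat) (j : 'I_r) (S : {pred 'I_r}) :
  m j <= t -> j \in S -> {subset [pred l : 'I_r | t < m l] <= S} ->
  #|[pred l : 'I_r | t < m l]| < #|S|.
Proof.
move=> mjt jS subS; apply/proper_card/properP; split; first exact/fintype.subsetP.
by exists j; rewrite // inE -leqNgt.
Qed.

End NonincreasingMultiplicities.

Section DiagPow.
Variable R : realType.
Local Notation C := (Cx R).

Lemma diag_pow_mulE n p (z0 z : C) (m : nat -> nat) (M : 'M[C]_(n, p)) i j :
  (diag_pow n z0 m z *m M) i j = (z - z0) ^+ m i * M i j.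
Proof.
rewrite !mxE (bigD1 i) //= big1 ?addr0 => [|k ki]; rewrite mxE ?eqxx //.
by rewrite eq_sym (negbTE ki) mul0r.
Qed.

Lemma mul_diag_pow_invE n p (z0 z : C) (m : nat -> nat) (M : 'M[C]_(n, p)) i j :
  (M *m diag_pow_inv p z0 m z) i j = M i j * ((z - z0) ^+ m j)^-1.
Proof.
rewrite !mxE (bigD1 j) //= big1 ?addr0 => [|k kj]; rewrite mxE ?eqxx //.
by rewrite (negbTE kj) mulr0.
Qed.

Lemma col_mulmx n p q (M : 'M[C]_(n, p)) (N : 'M[C]_(p, q)) l :
  col l (M *m N) = M *m col l N.
Proof. by rewrite !colE mulmxA. Qed.

Lemma mx_holo_on_col p q (O : set C) (M : C -> 'M[C]_(p, q)) l :
  mx_holo_on O M -> mx_holo_on O (fun z => col l (M z)).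
Proof.
move=> hM i k; have -> : (fun z => col l (M z) i k) = fun z => M z i l.
  by apply/funext => z; rewrite mxE.
exact: hM.
Qed.

Lemma holo_near_opp (z0 : C) (f g : C -> C) :
  (forall z, g z = - f z) -> holo_near z0 f -> holo_near z0 g.
Proof.
move=> gf; have -> : g = fun z => - f z by apply/funext.
by apply: filterS => z; apply: derivableN.
Qed.

Lemma zero_order_gt0_eq0 n (z0 : C) (F : C -> 'cV[C]_n) k :
  zero_order z0 F k -> (0 < k)%N -> F z0 = 0.
Proof.
case=> g [_ _ /nbhs_singleton ->] k_gt0.
by rewrite subrr expr0n (gtn_eqF k_gt0) scale0r.
Qed.

Lemma doteq0_mul_diag_pow_invP n p (z0 : C) (m : nat -> nat)
    (F : C -> 'M[C]_(n, p)) :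
  mx_doteq z0 (fun z => F z *m diag_pow_inv p z0 m z) (fun _ => 0) <->
  forall l : 'I_p, exists g : C -> 'cV[C]_n,
    mx_holo_near z0 g /\ \forall z \near z0^', col l (F z) = (z - z0) ^+ m l *: g z.
Proof.
split.
- move=> [G [G_holo FG]] l.
  exists (fun z => - col l (G z)); split.
    by move=> i k; apply: holo_near_opp (G_holo i l) => z; rewrite !mxE.
  apply: filterS2 FG (nbhs_dnbhs_neq z0) => z FGz zz0; apply/colP => i.
  have := congr1 (fun M : 'M[C]_(n, p) => M i l) FGz.
  rewrite /= mxE [X in _ + X]mxE mul_diag_pow_invE mxE sub0r !mxE.
  by move=> <-; rewrite opprK mulrC mulrVK // unitfE expf_neq0 // subr_eq0.
- move=> g_fac; have [g {}g_fac] := choice g_fac.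
  exists (fun z => \matrix_(i, l) - g l z i 0); split.
    by move=> i l; apply: holo_near_opp ((g_fac l).1 i 0) => z; rewrite mxE.
  have: \forall z \near z0^', forall l, col l (F z) = (z - z0) ^+ m l *: g l z.
    by apply: filter_forall => l; apply: (g_fac l).2.
  apply: filterS2 (nbhs_dnbhs_neq z0) => z zz0 Fg; apply/matrixP => i l.
  have FGil : F z i l = (z - z0) ^+ m l * g l z i 0.
    by have /colP/(_ i) := Fg l; rewrite !mxE.
  rewrite mxE [X in _ + X]mxE mul_diag_pow_invE mxE sub0r mxE FGil.
  by rewrite mulrC mulKr // unitfE expf_neq0 // subr_eq0.
Qed.

End DiagPow.

Section LocalSmithForm.
Variables (R : realType) (l0 : Cx R) (n r : nat) (m : nat -> nat).
Local Notation C := (Cx R).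
Variables (T UL UR : C -> 'M[C]_n) (Y : C -> 'M[C]_(n, r)).
Hypotheses (UL_cont : mx_continuous_at l0 UL) (UR_cont : mx_continuous_at l0 UR).
Hypotheses (T_cont : mx_continuous_at l0 T) (Y_cont : mx_continuous_at l0 Y).
Hypothesis UR_unit : UR l0 \in unitmx.
Hypothesis local_smith :
  \forall z \near l0, UL z *m T z *m UR z = diag_pow n l0 m z.
Hypothesis m_noninc : forall i j, (i <= j < n)%N -> (m j <= m i)%N.
Hypothesis r_le_n : (r <= n)%N.

Lemma adjUR_Y_coef_eq0 (l : 'I_r) (k : nat) (h : C -> 'cV[C]_n) (i : 'I_n) :
  mx_continuous_at l0 h ->
  (\forall z \near l0^', T z *m col l (Y z) = (z - l0) ^+ k *: h z) ->
  (m i < k)%N \/ (m i = k /\ h l0 = 0) -> (\adj (UR l0) *m Y l0) i l = 0.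
Proof.
move=> h_cont Th mik.
pose f z := (\adj (UR z) *m Y z) i l.
pose g z := \det (UR z) * (UL z *m h z) i 0.
have f_cont : {for l0, continuous f}.
  exact: mx_continuous_mul (mx_continuous_adj UR_cont) Y_cont i l.
have g_cont : {for l0, continuous g}.
  by apply: continuousM; [apply: continuous_det | apply: mx_continuous_mul].
apply: (eq0_of_chi_pow_mul (a := m i) (b := k) f_cont g_cont).
  apply: filterS2 (nbhs_dnbhs local_smith) Th => z smith_z Th_z.
  have col_l : (UL z *m T z *m Y z) i l = (UL z *m (T z *m col l (Y z))) i 0.
    by rewrite mulmxA -col_mulmx !mxE.
  rewrite /f /g -diag_pow_mulE -smith_z mulmxA -(mulmxA _ (UR z)) mul_mx_adj.
  by rewrite mul_mx_scalar -scalemxAl mxE col_l Th_z -scalemxAr mxE mulrCA.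
by case: mik => [|[-> h0]]; [left | right; rewrite /g h0 mulmx0 mxE mulr0].
Qed.

Hypothesis Y_rank : \rank (Y l0) = r.

Lemma rank_adjUR_Y : \rank (\adj (UR l0) *m Y l0) = r.
Proof.
have det_neq0 : \det (UR l0) != 0 by rewrite -unitfE -unitmxE.
apply/eqP/rank_colP => c /(congr1 (mulmx (UR l0))).
rewrite mulmx0 !mulmxA mul_mx_adj mul_scalar_mx -!scalemxAl => /eqP.
rewrite scalemx_eq0 (negbTE det_neq0) /= => /eqP.
by move/rank_colP: (introT eqP Y_rank); apply.
Qed.

Lemma adjUR_Y_support_contra (t : nat) (j : 'I_r) (S : {pred 'I_r}) :
  (m j <= t)%N -> j \in S -> {subset [pred l : 'I_r | (t < m l)%N] <= S} ->
  ~ (forall (i : 'I_n) (l : 'I_r), l \in S -> (m i <= t)%N ->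
     (\adj (UR l0) *m Y l0) i l = 0).
Proof.
move=> mjt jS subS supp.
have S_le : (#|S| <= #|[pred i : 'I_n | (t < m i)%N]|)%N.
  apply: card_le_of_col_support rank_adjUR_Y _ => i l lS.
  by rewrite inE -leqNgt; apply: supp.
rewrite (card_mult_gt_widen m_noninc r_le_n mjt) in S_le.
by have := leq_ltn_trans S_le (card_mult_gt_lt mjt jS subS); rewrite ltnn.
Qed.

Lemma root_mult_le_mult (nu : 'I_r -> nat) (G : 'I_r -> C -> 'cV[C]_n) :
  (forall l, mx_continuous_at l0 (G l)) ->
  (forall l, \forall z \near l0^', T z *m col l (Y z) = (z - l0) ^+ nu l *: G l z) ->
  (forall i j : 'I_r, (i <= j)%N -> (nu j <= nu i)%N) ->
  forall j, (nu j <= m j)%N.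
Proof.
move=> G_cont TG nu_noninc j; rewrite leqNgt; apply/negP => mj_lt_nuj.
pose S := [pred l : 'I_r | (l <= j)%N].
apply: (adjUR_Y_support_contra (leqnn (m j)) (S := S)).
- by rewrite inE.
- move=> l; rewrite !inE => mj_lt_ml; apply: ltnW.
  apply: (lt_of_mult_gt m_noninc (t := m j) (leq_trans (ltn_ord l) r_le_n)).
  by rewrite leqnn.
move=> i l; rewrite inE => lj mi_le_mj.
apply: adjUR_Y_coef_eq0 (G_cont l) (TG l) _; left.
exact: leq_ltn_trans mi_le_mj (leq_trans mj_lt_nuj (nu_noninc _ _ lj)).
Qed.

Lemma factor_at_neq0 (g : 'I_r -> C -> 'cV[C]_n) :
  (forall l, mx_continuous_at l0 (g l)) ->
  (forall l, \forall z \near l0^', T z *m col l (Y z) = (z - l0) ^+ m l *: g l z) ->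
  forall j, g j l0 != 0.
Proof.
move=> g_cont Tg j; apply/negP => /eqP gj0.
pose S := [pred l : 'I_r | (m j < m l)%N || (l == j)].
apply: (adjUR_Y_support_contra (leqnn (m j)) (S := S)).
- by rewrite inE eqxx orbT.
- by move=> l; rewrite !inE => ->.
move=> i l; rewrite inE => /orP[mj_lt_ml | /eqP ->] mi_le_mj.
  apply: adjUR_Y_coef_eq0 (g_cont l) (Tg l) _; left.
  exact: leq_ltn_trans mj_lt_ml.
apply: adjUR_Y_coef_eq0 (g_cont j) (Tg j) _.
by move: mi_le_mj; rewrite leq_eqVlt => /orP[/eqP|]; [right | left].
Qed.

(* U_R(l0)^-1 maps ker T(l0), of dimension r, into the span of the coordinates i with
   m_i > 0, so at least r of the m_i are positive. *)
Lemma mult_gt0 : \rank (kermx (T l0)^T) = r -> forall l : 'I_r, (0 < m l)%N.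
Proof.
move=> rank_ker l; rewrite lt0n; apply/negP => /eqP ml0.
pose V := invmx (UR l0) *m (kermx (T l0)^T)^T.
have rankV : \rank V = r.
  rewrite -mxrank_tr trmx_mul trmxK mxrankMfree ?rank_ker //.
  by rewrite row_free_unit unitmx_tr unitmx_inv.
have V0 i j : i \notin [pred i : 'I_n | (0 < m i)%N] -> V i j = 0.
  rewrite inE lt0n negbK => /eqP mi0.
  have TK0 : T l0 *m (kermx (T l0)^T)^T = 0.
    by rewrite -[X in X *m _]trmxK -trmx_mul mulmx_ker trmx0.
  rewrite -[V i j]mul1r -(expr0 (l0 - l0)) -mi0 -diag_pow_mulE.
  rewrite -(nbhs_singleton local_smith) /V mulmxA -(mulmxA _ (UR l0)) mulmxV //.
  by rewrite mulmx1 -mulmxA TK0 mulmx0 mxE.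
have ml_le0 : (m l <= 0)%N by rewrite ml0.
have := rank_le_card_nonzero_rows V0.
rewrite rankV (card_mult_gt_widen m_noninc r_le_n ml_le0) => r_le.
have := card_mult_gt_lt (S := 'I_r) ml_le0 isT (fun _ _ => isT).
by rewrite card_ord ltnNge r_le.
Qed.

Lemma factor_root_mult (g : 'I_r -> C -> 'cV[C]_n) :
  (forall l, mx_holo_near l0 (g l)) ->
  (forall l, \forall z \near l0^', T z *m col l (Y z) = (z - l0) ^+ m l *: g l z) ->
  forall l, root_mult T l0 (fun z => col l (Y z)) (m l).
Proof.
move=> g_holo Tg l; have g_cont l' := mx_holo_near_continuous (g_holo l').
exists (g l); split; [exact: g_holo | exact: factor_at_neq0 g_cont Tg l |].
apply: continuous_dnbhs_mx_eq (Tg l).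
  by apply: mx_continuous_mul => //; apply: mx_continuous_col.
exact: mx_continuous_chi_scale (g_cont l).
Qed.

Lemma canonical_mult_eq (nu : 'I_r -> nat) :
  (forall j, root_mult T l0 (fun z => col j (Y z)) (nu j)) ->
  (\sum_(j < r) nu j = \sum_(j < r) m j)%N ->
  (forall i j : 'I_r, (i <= j)%N -> (nu j <= nu i)%N) ->
  forall j, nu j = m j.
Proof.
move=> /choice[G G_fac] sum_nu nu_noninc.
have G_cont l : mx_continuous_at l0 (G l).
  by case: (G_fac l) => /mx_holo_near_continuous.
have TG l : \forall z \near l0^', T z *m col l (Y z) = (z - l0) ^+ nu l *: G l z.
  by case: (G_fac l) => _ _ /nbhs_dnbhs.
have nu_le := root_mult_le_mult G_cont TG nu_noninc.
have [_] := leqif_sum (fun j (_ : true) => leqif_eq (nu_le j)).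
by rewrite sum_nu eqxx => /esym/forallP nu_m j; apply/eqP/nu_m.
Qed.

End LocalSmithForm.

Theorem mainTheorem9 (R : realType) (Om : set (Cx R)) (l0 : Cx R) (n r : nat)
    (T : Cx R -> 'M[Cx R]_n) (m : nat -> nat) :
  open Om -> Om l0 -> mx_holo_on Om T ->
  (exists z, Om z /\ \det (T z) != 0) ->
  \det (T l0) = 0 ->
  \rank (kermx (T l0)^T) = r ->
  partial_multiplicities T l0 m ->
  forall Y : Cx R -> 'M[Cx R]_(n, r), mx_holo_on Om Y ->
    (right_canonical Om T l0 m Y <->
       (\rank (Y l0) = r /\
        mx_doteq l0 (fun z => T z *m Y z *m diag_pow_inv r l0 m z) (fun _ => 0))).
Proof.
move=> _ l0_Om T_holo _ _ rank_ker [m_noninc [UL [UR [UL_holo UR_holo _ UR_unit smith]]]].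
move=> Y Y_holo.
have r_le_n : (r <= n)%N by rewrite -rank_ker rank_leq_row.
have T_cont := mx_holo_on_continuous T_holo l0_Om.
have Y_cont := mx_holo_on_continuous Y_holo l0_Om.
have UL_cont := mx_holo_near_continuous UL_holo.
have UR_cont := mx_holo_near_continuous UR_holo.
split.
- case=> _ _ /rank_colP/eqP Y_rank [nu [nu_mult sum_nu nu_noninc]].
  have nu_m := canonical_mult_eq UL_cont UR_cont Y_cont UR_unit smith m_noninc r_le_n
    Y_rank nu_mult sum_nu nu_noninc.
  split => //; apply/doteq0_mul_diag_pow_invP => l.
  have [g [g_holo _ Tg]] := nu_mult l.
  exists g; split => //; rewrite -nu_m.
  by apply: filterS (nbhs_dnbhs Tg) => z; rewrite col_mulmx.
- case=> Y_rank /doteq0_mul_diag_pow_invP/choice[g g_fac].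
  have Tg l : \forall z \near l0^', T z *m col l (Y z) = (z - l0) ^+ m l *: g l z.
    by apply: filterS (g_fac l).2 => z; rewrite col_mulmx.
  have mult := factor_root_mult UL_cont UR_cont T_cont Y_cont UR_unit smith m_noninc
    r_le_n Y_rank (fun l => (g_fac l).1) Tg.
  have m_gt0 := mult_gt0 UR_unit smith m_noninc r_le_n rank_ker.
  split => //.
  + move=> j; split; first exact: mx_holo_on_col.
    * exact: rank_col_neq0.
    * exact: zero_order_gt0_eq0 (mult j) (m_gt0 j).
  + by move=> c; apply/rank_colP/eqP.
  + exists (fun j => m j); split => // i j ij; apply: m_noninc.
    by rewrite ij (leq_trans (ltn_ord j) r_le_n).
Qed.
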